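(* Let $Q=(q_n)_{n\ge1}$ be a basic sequence that is infinite in limit, let $k\in\mathbb{N}$, and let $x=E_0.E_1E_2\cdots$ (w.r.t. $Q$) be $Q$-normal of order $k$. Then there exists a real number $y=F_0.F_1F_2\cdots$ (w.r.t. $Q$) such that the set $\{n : E_n\neq F_n\}$ has natural density zero and $y\notin\bigcup_{j=1}^{\infty}\mathscr{N}_j(Q)$, i.e. $y$ is not $Q$-normal of order $j$ for any $j\ge1$.
   Context: A basic sequence is a sequence $Q=(q_n)_{n\ge1}$ of integers with $q_n\ge2$ for all $n$. The $Q$-Cantor series expansion of a real $x$ is the unique expansion $x=E_0+\sum_{n\ge1}\frac{E_n}{q_1\cdots q_n}$ with $E_0=\lfloor x\rfloor$, $E_n\in\{0,1,\dots,q_n-1\}$ for $n\ge1$, and $E_n\ne q_n-1$ for infinitely many $n$; this is written $x=E_0.E_1E_2\cdots$ w.r.t. $Q$. $Q$ is infinite in limit if $q_n\to\infty$. A block of length $k$ is a $k$-tuple $B=(b_1,\dots,b_k)$ of non-negative integers; $N_n^Q(B,x)$ denotes the number of indices $i\le n$ with $E_i=b_1,E_{i+1}=b_2,\dots,E_{i+k-1}=b_k$. Let $Q_n^{(k)}=\sum_{j=1}^n\frac{1}{q_jq_{j+1}\cdots q_{j+k-1}}$. A real $x$ is $Q$-normal of order $k$ if $\lim_{n\to\infty}N_n^Q(B,x)/Q_n^{(k)}=1$ for every block $B$ of length $k$; $\mathscr{N}_k(Q)$ denotes the set of such $x$. *)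

From Stdlib Require Import Reals ZArith List Lia Lra.
Open Scope R_scope.

(* A basic sequence Q = (q_n)_{n>=1} is a function q : nat -> nat;
   the value q 0 is irrelevant (indices start at 1). *)
Definition basic_seq (q : nat -> nat) : Prop :=
  forall n : nat, (1 <= n)%nat -> (2 <= q n)%nat.

Definition infinite_in_limit (q : nat -> nat) : Prop :=
  forall M : nat, exists N : nat, forall n : nat, (N <= n)%nat -> (M <= q n)%nat.

Fixpoint qprod (q : nat -> nat) (n : nat) : R :=
  match n with
  | O => 1
  | S m => qprod q m * INR (q (S m))
  end.

Definition cantor_expansion (q : nat -> nat) (x : R) (E : nat -> Z) : Prop :=
  E 0%nat = Int_part x /\ IZR (E 0%nat) <= x < IZR (E 0%nat) + 1 /\
  (forall n : nat, (1 <= n)%nat -> (0 <= E n < Z.of_nat (q n))%Z) /\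
  (forall m : nat, exists n : nat, (m < n)%nat /\ E n <> (Z.of_nat (q n) - 1)%Z) /\
  infinite_sum (fun n : nat => IZR (E (S n)) / qprod q (S n)) (x - IZR (E 0%nat)).

Fixpoint block_at (E : nat -> Z) (i : nat) (B : list nat) : bool :=
  match B with
  | nil => true
  | b :: B' => Z.eqb (E i) (Z.of_nat b) && block_at E (S i) B'
  end.

Fixpoint block_count (E : nat -> Z) (B : list nat) (n : nat) : nat :=
  match n with
  | O => O
  | S m => (block_count E B m + if block_at E (S m) B then 1 else 0)%nat
  end.

Fixpoint qwin (q : nat -> nat) (j k : nat) : R :=
  match k with
  | O => 1
  | S k' => INR (q j) * qwin q (S j) k'
  end.

Fixpoint Qk (q : nat -> nat) (k n : nat) : R :=
  match n with
  | O => 0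
  | S m => Qk q k m + / qwin q (S m) k
  end.

Definition normal_digits (q : nat -> nat) (k : nat) (E : nat -> Z) : Prop :=
  forall B : list nat, length B = k ->
    Un_cv (fun n => INR (block_count E B n) / Qk q k n) 1.

Definition Q_normal (q : nat -> nat) (k : nat) (x : R) : Prop :=
  exists E : nat -> Z, cantor_expansion q x E /\ normal_digits q k E.

Fixpoint count_upto (P : nat -> bool) (n : nat) : nat :=
  match n with
  | O => O
  | S m => (count_upto P m + if P (S m) then 1 else 0)%nat
  end.

Definition density_zero (P : nat -> bool) : Prop :=
  Un_cv (fun n => INR (count_upto P n) / INR n) 0.

(* Zero out the digits of x on a sparse union of intervals (i c_i, (i+1) c_i].
   Each interval fills only a 1/(i+1) fraction of [1, (i+1) c_i] and is longer
   than everything before it, so the altered positions have density zero.  But c_i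
   is also huge compared with the index beyond which q_n >= 4(i+1), so at
   n = (i+1) c_i the zero block of any fixed length j has occurred at least twice
   as often as Q_n^(j) predicts.  Since Cantor expansions are unique, the new digits
   are the expansion of the value y they define, and y is normal of no order. *)

From Stdlib Require Import Reals ZArith List Lia Lra Bool.
From Stdlib Require Import IndefiniteDescription FunctionalExtensionality.
Open Scope R_scope.

Section CantorSeries.

Variable q : nat -> nat.
Hypothesis q_basic : basic_seq q.

Lemma q_pos n : (1 <= n)%nat -> 0 < INR (q n).
Proof. intros Hn; apply lt_0_INR; specialize (q_basic n Hn); lia. Qed.

Lemma qprod_pos n : 0 < qprod q n.
Proof.
  induction n as [|n IH]; simpl; [lra|].
  apply Rmult_lt_0_compat; [exact IH | apply q_pos; lia].
Qed.

Fixpoint cantor_sum (D : nat -> Z) (n : nat) : R :=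
  match n with
  | O => 0
  | S m => cantor_sum D m + IZR (D (S m)) / qprod q (S m)
  end.

Definition admissible_digits (D : nat -> Z) : Prop :=
  forall n, (1 <= n)%nat -> (0 <= D n < Z.of_nat (q n))%Z.

Definition infinitely_often_not_max (D : nat -> Z) : Prop :=
  forall m, exists n, (m < n)%nat /\ D n <> (Z.of_nat (q n) - 1)%Z.

Lemma infinite_sum_cantor_sum D l :
  infinite_sum (fun n => IZR (D (S n)) / qprod q (S n)) l <-> Un_cv (cantor_sum D) l.
Proof.
  assert (Hsum : forall n, sum_f_R0 (fun k => IZR (D (S k)) / qprod q (S k)) n
                           = cantor_sum D (S n)).
  { induction n as [|n IH]; [simpl; ring|]. rewrite tech5, IH; reflexivity. }
  split; intros Hcv eps Heps; destruct (Hcv eps Heps) as [N HN].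
  - exists (S N); intros [|n] Hn; [lia|]. rewrite <- Hsum; apply HN; lia.
  - exists N; intros n Hn. rewrite Hsum; apply HN; lia.
Qed.

Lemma cantor_sum_S D m :
  cantor_sum D (S m) = cantor_sum D m + IZR (D (S m)) / qprod q (S m).
Proof. reflexivity. Qed.

Lemma cantor_sum_ext D D' n :
  (forall k, (k <= n)%nat -> D k = D' k) -> cantor_sum D n = cantor_sum D' n.
Proof.
  induction n as [|n IH]; intros Heq; simpl; [reflexivity|].
  rewrite IH, Heq; [reflexivity | lia | intros; apply Heq; lia].
Qed.

Section Digits.

Variable D : nat -> Z.
Hypothesis D_admissible : admissible_digits D.

Lemma cantor_sum_growing : Un_growing (cantor_sum D).
Proof.
  intros n; rewrite cantor_sum_S.
  assert (0 <= IZR (D (S n)) / qprod q (S n)); [|lra].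
  unfold Rdiv; apply Rmult_le_pos; [|left; apply Rinv_0_lt_compat, qprod_pos].
  apply IZR_le; specialize (D_admissible (S n) ltac:(lia)); lia.
Qed.

(* [cantor_sum D n + / qprod q n] bounds every value whose expansion starts with
   the digits D 1, ..., D n. *)
Definition cantor_upper n := cantor_sum D n + / qprod q n.

Lemma cantor_upper_S_le m (c : Z) :
  (0 <= c)%Z -> (D (S m) + 1 + c <= Z.of_nat (q (S m)))%Z ->
  cantor_upper (S m) + IZR c / qprod q (S m) <= cantor_upper m.
Proof.
  intros Hc Hd. unfold cantor_upper; simpl cantor_sum; simpl qprod.
  assert (HP := qprod_pos m). assert (HQ := q_pos (S m) ltac:(lia)).
  set (P := qprod q m) in *; set (Q := INR (q (S m))) in *.
  assert (Hdig : IZR (D (S m)) + 1 + IZR c <= Q).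
  { unfold Q; rewrite INR_IZR_INZ, <- plus_IZR, <- plus_IZR; apply IZR_le; lia. }
  assert (Ht : 0 < / (P * Q)) by (apply Rinv_0_lt_compat; nra).
  assert (HinvP : / P = Q * / (P * Q)) by (field; lra).
  rewrite HinvP; unfold Rdiv. nra.
Qed.

Lemma cantor_upper_antitone N n : (N <= n)%nat -> cantor_upper n <= cantor_upper N.
Proof.
  induction 1 as [|n _ IH]; [lra|].
  assert (H := cantor_upper_S_le n 0 ltac:(lia) ltac:(specialize (D_admissible (S n)); lia)).
  unfold Rdiv in H; rewrite Rmult_0_l in H; lra.
Qed.

Variable L : R.
Hypothesis D_cv : Un_cv (cantor_sum D) L.

Lemma cantor_sum_le_limit N : cantor_sum D N <= L.
Proof. exact (growing_ineq _ _ cantor_sum_growing D_cv N). Qed.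

Lemma cantor_limit_le_upper N : L <= cantor_upper N.
Proof.
  apply (Rle_cv_lim (Un := cantor_sum D) (Vn := fun _ => cantor_upper N)); [|exact D_cv|].
  - intros n. destruct (Nat.le_ge_cases n N) as [Hn|Hn].
    + assert (H := growing_prop _ N n cantor_sum_growing Hn).
      assert (0 < / qprod q N) by (apply Rinv_0_lt_compat, qprod_pos).
      unfold cantor_upper; lra.
    + assert (H := cantor_upper_antitone N n Hn).
      assert (0 < / qprod q n) by (apply Rinv_0_lt_compat, qprod_pos).
      unfold cantor_upper in *; lra.
  - intros eps Heps; exists O; intros; unfold R_dist; rewrite Rminus_diag, Rabs_R0; lra.
Qed.

Lemma cantor_limit_lt_upper N : infinitely_often_not_max D -> L < cantor_upper N.
Proof.
  intros Hnot_max. destruct (Hnot_max N) as [[|m] [HNm Hm]]; [lia|].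
  assert (Hdrop := cantor_upper_S_le m 1 ltac:(lia)
                     ltac:(specialize (D_admissible (S m)); lia)).
  assert (0 < IZR 1 / qprod q (S m)) by (apply Rdiv_lt_0_compat; [lra | apply qprod_pos]).
  assert (H1 := cantor_limit_le_upper (S m)).
  assert (H2 := cantor_upper_antitone N m ltac:(lia)).
  lra.
Qed.

End Digits.

Lemma cantor_limit_lt_of_digit_lt D D' L L' m :
  admissible_digits D -> admissible_digits D' -> infinitely_often_not_max D ->
  Un_cv (cantor_sum D) L -> Un_cv (cantor_sum D') L' ->
  cantor_sum D m = cantor_sum D' m -> (D (S m) < D' (S m))%Z -> L < L'.
Proof.
  intros HD HD' Hnot_max Hcv Hcv' Hprefix Hlt.
  assert (H := cantor_limit_lt_upper D HD L Hcv (S m) Hnot_max).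
  assert (H' := cantor_sum_le_limit D' HD' L' Hcv' (S m)).
  unfold cantor_upper in H; rewrite cantor_sum_S in H, H'. rewrite Hprefix in H.
  assert (Hdig : IZR (D (S m)) + 1 <= IZR (D' (S m))) by (rewrite <- plus_IZR; apply IZR_le; lia).
  assert (Hinv : 0 < / qprod q (S m)) by (apply Rinv_0_lt_compat, qprod_pos).
  assert (Hscaled := Rmult_le_compat_r _ _ _ (Rlt_le _ _ Hinv) Hdig).
  unfold Rdiv in *; lra.
Qed.

Theorem cantor_expansion_unique y D D' :
  cantor_expansion q y D -> cantor_expansion q y D' -> D = D'.
Proof.
  intros (H0 & _ & HD & Hnm & Hs) (H0' & _ & HD' & Hnm' & Hs').
  assert (Hfloor : D O = D' O) by congruence.
  rewrite Hfloor in Hs; apply infinite_sum_cantor_sum in Hs, Hs'.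
  apply functional_extensionality; intros n.
  induction n as [[|m] IH] using lt_wf_ind; [exact Hfloor|].
  assert (Hprefix : cantor_sum D m = cantor_sum D' m)
    by (apply cantor_sum_ext; intros; apply IH; lia).
  destruct (Z.lt_total (D (S m)) (D' (S m))) as [Hlt|[Heq|Hgt]]; [exfalso| exact Heq |exfalso].
  - assert (H := cantor_limit_lt_of_digit_lt D D' _ _ m HD HD' Hnm Hs Hs' Hprefix Hlt); lra.
  - assert (H := cantor_limit_lt_of_digit_lt D' D _ _ m HD' HD Hnm' Hs' Hs
                   (eq_sym Hprefix) Hgt); lra.
Qed.

Theorem cantor_expansion_exists D :
  admissible_digits D -> infinitely_often_not_max D ->
  exists y, cantor_expansion q y D.
Proof.
  intros HD Hnm.
  assert (Hub : has_ub (cantor_sum D)).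
  { exists (cantor_upper D O); intros r [n ->].
    assert (H := cantor_upper_antitone D HD O n ltac:(lia)).
    assert (0 < / qprod q n) by (apply Rinv_0_lt_compat, qprod_pos).
    unfold cantor_upper in *; lra. }
  destruct (growing_cv _ (cantor_sum_growing D HD) Hub) as [L HL].
  assert (HL0 := cantor_sum_le_limit D HD L HL O).
  assert (HL1 := cantor_limit_lt_upper D HD L HL O Hnm).
  unfold cantor_upper in HL1; simpl in HL0, HL1; rewrite Rinv_1 in HL1.
  exists (IZR (D O) + L).
  split; [apply Int_part_spec; lra|]. split; [lra|].
  split; [exact HD|]. split; [exact Hnm|].
  apply infinite_sum_cantor_sum. replace (IZR (D O) + L - IZR (D O)) with L by ring. exact HL.
Qed.

End CantorSeries.

Section Counting.

Local Open Scope nat_scope.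

Lemma count_upto_le P n : count_upto P n <= n.
Proof. induction n as [|n IH]; simpl; [lia|]. destruct (P (S n)); lia. Qed.

Lemma count_upto_mono (P P' : nat -> bool) n :
  (forall m, P m = true -> P' m = true) -> count_upto P n <= count_upto P' n.
Proof.
  intros HPP'. induction n as [|n IH]; simpl; [lia|].
  destruct (P (S n)) eqn:HP; [rewrite (HPP' _ HP); lia|]. destruct (P' (S n)); lia.
Qed.

Lemma block_count_mono E B n m : n <= m -> block_count E B n <= block_count E B m.
Proof. induction 1 as [|m _ IH]; simpl; lia. Qed.

Lemma block_at_repeat_zero E j p :
  (forall t, t < j -> E (p + t) = 0%Z) -> block_at E p (repeat 0 j) = true.
Proof.
  revert p; induction j as [|j IH]; intros p Hzero; simpl; [reflexivity|].
  apply andb_true_intro; split.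
  - apply Z.eqb_eq. rewrite <- (Hzero 0) by lia. rewrite Nat.add_0_r; reflexivity.
  - apply IH; intros t Ht. replace (S p + t) with (p + S t) by lia. apply Hzero; lia.
Qed.

Lemma block_count_repeat_zero_ge E j a b n :
  1 <= j -> (forall m, a < m <= b -> E m = 0%Z) -> a <= b <= n ->
  b - a + 1 - j <= block_count E (repeat 0 j) n.
Proof.
  intros Hj1 Hzero Hbn.
  assert (Hrun : forall d, a + d + j <= b + 1 -> d <= block_count E (repeat 0 j) (a + d)).
  { induction d as [|d IH]; intros Hd; [lia|].
    rewrite Nat.add_succ_r; simpl.
    rewrite block_at_repeat_zero by (intros t Ht; apply Hzero; lia).
    specialize (IH ltac:(lia)); lia. }
  destruct (Nat.le_gt_cases j (b - a + 1)) as [Hj|Hj]; [|lia].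
  specialize (Hrun (b - a + 1 - j) ltac:(lia)).
  pose proof (block_count_mono E (repeat 0 j) (a + (b - a + 1 - j)) n ltac:(lia)).
  lia.
Qed.

End Counting.

Section ZeroRuns.

Local Open Scope nat_scope.

Variable g : nat -> nat.

(* The i-th run of zeros is (i * run_len i, run_end i]; its length exceeds
   [run_end (i - 1)], and the summand [4 * g (4 * (i + 1))] makes it long compared
   with the index [g (4 * (i + 1))] beyond which [q >= 4 * (i + 1)]. *)
Fixpoint run_end (i : nat) : nat :=
  match i with
  | O => O
  | S p => (i + 1) * (run_end p + 4 * g (4 * (i + 1)) + 2 * i + 1)
  end.

Definition run_len (i : nat) : nat := run_end (pred i) + 4 * g (4 * (i + 1)) + 2 * i + 1.

Lemma run_end_S i : run_end (S i) = (S i + 1) * run_len (S i).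
Proof. reflexivity. Qed.

Lemma run_len_S i : run_len (S i) = run_end i + 4 * g (4 * (S i + 1)) + 2 * S i + 1.
Proof. reflexivity. Qed.

Lemma run_end_ge i : i <= run_end i.
Proof. destruct i as [|i]; [lia|]. rewrite run_end_S, run_len_S. nia. Qed.

Lemma run_end_lt_run_len i : run_end i < run_len (S i).
Proof. rewrite run_len_S; lia. Qed.

Lemma run_end_mono i i' : i <= i' -> run_end i <= run_end i'.
Proof.
  induction 1 as [|i' _ IH]; [lia|].
  pose proof (run_end_lt_run_len i'). rewrite run_end_S; nia.
Qed.

Definition in_zero_runs (m : nat) : bool :=
  existsb (fun l => (1 <=? l) && (l * run_len l <? m) && (m <=? run_end l)) (seq 0 m).

Lemma in_zero_runs_intro l m :
  1 <= l -> l * run_len l < m <= run_end l -> in_zero_runs m = true.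
Proof.
  intros Hl Hm. apply existsb_exists. exists l; split.
  - apply in_seq. assert (1 <= run_len l) by (unfold run_len; lia). nia.
  - rewrite !andb_true_iff, Nat.leb_le, Nat.ltb_lt, Nat.leb_le; lia.
Qed.

Lemma in_zero_runs_segment i m : run_end i < m <= run_end (S i) ->
  in_zero_runs m = (S i * run_len (S i) <? m).
Proof.
  intros Hm. destruct (Nat.ltb_spec (S i * run_len (S i)) m) as [Hlt|Hge].
  - apply (in_zero_runs_intro (S i)); lia.
  - apply not_true_is_false; intros Hin.
    apply existsb_exists in Hin as [l [_ Hl]].
    rewrite !andb_true_iff, Nat.leb_le, Nat.ltb_lt, Nat.leb_le in Hl.
    destruct (Nat.lt_total l (S i)) as [Hli|[->|Hli]]; [| lia |].
    + pose proof (run_end_mono l i ltac:(lia)); lia.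
    + destruct l as [|l]; [lia|].
      pose proof (run_end_mono (S i) l ltac:(lia)).
      rewrite run_len_S in Hl. nia.
Qed.

Lemma count_zero_runs_segment i n : run_end i <= n <= run_end (S i) ->
  count_upto in_zero_runs n = count_upto in_zero_runs (run_end i) + (n - S i * run_len (S i)).
Proof.
  pose proof (run_end_S i) as Hend. pose proof (run_end_lt_run_len i) as Hlen.
  intros [Hlo Hhi]. induction Hlo as [|n Hlo IH]; [nia|].
  simpl count_upto. rewrite IH by lia. rewrite (in_zero_runs_segment i) by lia.
  destruct (Nat.ltb_spec (S i * run_len (S i)) (S n)); nia.
Qed.

Lemma count_zero_runs_run_end i : S i * count_upto in_zero_runs (run_end i) <= 2 * run_end i.
Proof.
  destruct i as [|i]; [simpl; lia|].
  pose proof (count_zero_runs_segment i (run_end (S i)) ltac:(split; [apply run_end_mono|]; lia)).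
  pose proof (count_upto_le in_zero_runs (run_end i)).
  pose proof (run_end_lt_run_len i). rewrite run_end_S in *. nia.
Qed.

Lemma count_zero_runs_segment_le i n : run_end i < n <= run_end (S i) ->
  S i * count_upto in_zero_runs n <= 3 * n.
Proof.
  intros Hn. rewrite (count_zero_runs_segment i n) by lia.
  pose proof (count_zero_runs_run_end i).
  assert (S i * (n - S i * run_len (S i)) <= n).
  { rewrite run_end_S in Hn.
    destruct (Nat.le_gt_cases n (S i * run_len (S i))); nia. }
  nia.
Qed.

Lemma count_zero_runs_le i n : run_end i < n -> S i * count_upto in_zero_runs n <= 3 * n.
Proof.
  intros Hn.
  assert (Hseg : forall d, n <= run_end (i + d) -> S i * count_upto in_zero_runs n <= 3 * n).
  { induction d as [|d IH]; intros Hd; [rewrite Nat.add_0_r in Hd; lia|].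
    destruct (Nat.le_gt_cases n (run_end (i + d))) as [Hle|Hgt]; [exact (IH Hle)|].
    rewrite Nat.add_succ_r in Hd.
    pose proof (count_zero_runs_segment_le (i + d) n ltac:(lia)). nia. }
  apply (Hseg n). pose proof (run_end_ge (i + n)); lia.
Qed.

End ZeroRuns.

Lemma density_zero_of_sub_zero_runs g P :
  (forall m, P m = true -> in_zero_runs g m = true) -> density_zero P.
Proof.
  intros HP eps Heps.
  destruct (archimed_cor1 (eps / 3) ltac:(lra)) as [[|i] [Hi Hi0]]; [lia|].
  exists (S (run_end g i)); intros n Hn.
  pose proof (count_zero_runs_le g i n ltac:(lia)).
  pose proof (count_upto_mono P (in_zero_runs g) n HP).
  assert (Hbound : (S i * count_upto P n <= 3 * n)%nat) by nia.
  apply le_INR in Hbound; rewrite !mult_INR in Hbound.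
  replace (INR 3) with 3 in Hbound by (simpl; lra).
  set (c := INR (count_upto P n)) in *; set (I := INR (S i)) in *.
  assert (HI : 0 < I) by (apply lt_0_INR; lia).
  assert (HN : 0 < INR n) by (apply lt_0_INR; lia).
  assert (Hc : 0 <= c) by apply pos_INR.
  assert (HII : I * / I = 1) by (field; lra).
  assert (0 < / I) by (apply Rinv_0_lt_compat; lra).
  unfold R_dist; rewrite Rminus_0_r, Rabs_right
    by (unfold Rdiv; apply Rle_ge, Rmult_le_pos; [lra | left; apply Rinv_0_lt_compat; lra]).
  apply (Rmult_lt_reg_r (INR n)); [lra|].
  unfold Rdiv; rewrite Rmult_assoc, Rinv_l, Rmult_1_r by lra.
  nra.
Qed.

Lemma qwin_ge_1 q j m : basic_seq q -> (1 <= m)%nat -> 1 <= qwin q m j.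
Proof.
  intros Hq; revert m; induction j as [|j IH]; intros m Hm; simpl; [lra|].
  assert (H2 := Hq m Hm); apply le_INR in H2; simpl in H2.
  specialize (IH (S m) ltac:(lia)); nra.
Qed.

Lemma qwin_ge_q q j m : basic_seq q -> (1 <= j)%nat -> (1 <= m)%nat -> INR (q m) <= qwin q m j.
Proof.
  intros Hq Hj Hm; destruct j as [|j]; [lia|]; simpl.
  pose proof (qwin_ge_1 q j (S m) Hq ltac:(lia)); pose proof (pos_INR (q m)); nra.
Qed.

Lemma Qk_pos q j n : basic_seq q -> (1 <= n)%nat -> 0 < Qk q j n.
Proof.
  intros Hq Hn.
  assert (Hstep : forall m, 0 < / qwin q (S m) j)
    by (intros m; apply Rinv_0_lt_compat; pose proof (qwin_ge_1 q j (S m) Hq ltac:(lia)); lra).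
  assert (Hnonneg : forall m, 0 <= Qk q j m)
    by (induction m as [|m IH]; simpl Qk; [lra | specialize (Hstep m); lra]).
  destruct n as [|n]; [lia|]; simpl Qk.
  specialize (Hstep n); specialize (Hnonneg n); lra.
Qed.

(* Each term of Q_n^(j) is at most 1, and at most 1/M once q >= M. *)
Lemma Qk_le q j M N n :
  basic_seq q -> (1 <= j)%nat -> (1 <= M)%nat ->
  (forall m, (N <= m)%nat -> (M <= q m)%nat) ->
  Qk q j n <= INR N + INR n / INR M.
Proof.
  intros Hq Hj HM HqM.
  assert (HM1 : 1 <= INR M) by (apply (le_INR 1); exact HM).
  assert (0 < / INR M) by (apply Rinv_0_lt_compat; lra).
  enough (Hmin : Qk q j n <= INR (Nat.min n N) + INR n / INR M).
  { pose proof (le_INR _ _ (Nat.le_min_r n N)); lra. }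
  induction n as [|n IH]; simpl Qk; [simpl; unfold Rdiv; lra|].
  pose proof (qwin_ge_1 q j (S n) Hq ltac:(lia)).
  rewrite S_INR; unfold Rdiv in *; rewrite Rmult_plus_distr_r, Rmult_1_l.
  destruct (Nat.le_gt_cases N (S n)) as [HN|HN].
  - assert (HqS := le_INR _ _ (HqM (S n) HN)).
    pose proof (qwin_ge_q q j (S n) Hq Hj ltac:(lia)).
    assert (/ qwin q (S n) j <= / INR M) by (apply Rinv_le_contravar; lra).
    pose proof (le_INR _ _ (Nat.min_le_compat_r n (S n) N ltac:(lia))); lra.
  - replace (Nat.min (S n) N) with (S n) by lia; replace (Nat.min n N) with n in IH by lia.
    rewrite S_INR.
    assert (/ qwin q (S n) j <= 1) by (rewrite <- Rinv_1; apply Rinv_le_contravar; lra).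
    lra.
Qed.

Lemma not_normal_of_frequent_excess q j F B :
  length B = j ->
  (forall N, exists n, (N <= n)%nat /\ 0 < Qk q j n /\ 2 * Qk q j n <= INR (block_count F B n)) ->
  ~ normal_digits q j F.
Proof.
  intros HB Hexcess Hnormal.
  destruct (Hnormal B HB (1 / 2) ltac:(lra)) as [N HN].
  destruct (Hexcess N) as (n & Hn & Hpos & Hge).
  specialize (HN n Hn); unfold R_dist in HN; apply Rabs_def2 in HN.
  assert (2 <= INR (block_count F B n) / Qk q j n); [|lra].
  apply (Rmult_le_reg_r (Qk q j n)); [exact Hpos|].
  unfold Rdiv; rewrite Rmult_assoc, Rinv_l, Rmult_1_r by lra; lra.
Qed.

(* At [n = run_end g (S i)] the last run of [c = run_len g (S i)] zeros holds
   [c + 1 - j] copies of the zero block of length [j <= S i], whereas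
   [Q_n^(j) <= g M + c/4] with [M = 4 (S i + 1)]; as [c >= 4 g M + 2 j], the ratio
   is at least 2. *)
Lemma zero_runs_not_normal q g F j :
  basic_seq q -> (forall M n, (g M <= n)%nat -> (M <= q n)%nat) ->
  (forall m, in_zero_runs g m = true -> F m = 0%Z) -> (1 <= j)%nat ->
  ~ normal_digits q j F.
Proof.
  intros Hq Hg Hzero Hj.
  apply (not_normal_of_frequent_excess q j F (repeat 0%nat j) (repeat_length _ _)).
  intros N. set (i := Nat.max N j).
  set (n := run_end g (S i)); set (c := run_len g (S i)); set (M := (4 * (S i + 1))%nat).
  assert (Hn : n = ((S i + 1) * c)%nat) by apply run_end_S.
  assert (Hc : (4 * g M + 2 * j <= c)%nat) by (unfold c, M, i; rewrite run_len_S; lia).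
  assert (Hcount : (c + 1 <= block_count F (repeat 0%nat j) n + j)%nat).
  { enough (c + 1 - j <= block_count F (repeat 0%nat j) n)%nat by lia.
    replace c with (n - S i * c)%nat at 1 by nia.
    apply block_count_repeat_zero_ge; [exact Hj | | nia].
    intros m Hm; apply Hzero, (in_zero_runs_intro g (S i)); [lia | fold c; lia]. }
  assert (HQk : Qk q j n <= INR (g M) + INR n / INR M)
    by (apply Qk_le; [exact Hq | exact Hj | unfold M; lia | apply Hg]).
  assert (Hdiv : INR n / INR M = INR c / 4).
  { rewrite Hn; unfold M; rewrite !mult_INR; replace (INR 4) with 4 by (simpl; lra).
    pose proof (lt_0_INR (S i + 1) ltac:(lia)); field; lra. }
  exists n; split; [pose proof (run_end_ge g (S i)); unfold n, i in *; lia|].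
  split; [apply Qk_pos; [exact Hq | pose proof (run_end_ge g (S i)); unfold n; lia]|].
  apply le_INR in Hc, Hcount; rewrite !plus_INR, !mult_INR in Hc; rewrite !plus_INR in Hcount.
  replace (INR 4) with 4 in Hc by (simpl; lra); replace (INR 2) with 2 in Hc by (simpl; lra).
  simpl (INR 1) in Hcount. lra.
Qed.

Theorem theorem3p1 (q : nat -> nat) (k : nat) (x : R) (E : nat -> Z) :
  basic_seq q -> infinite_in_limit q -> (1 <= k)%nat ->
  cantor_expansion q x E -> Q_normal q k x ->
  exists (y : R) (F : nat -> Z),
    cantor_expansion q y F /\
    density_zero (fun n => negb (Z.eqb (E n) (F n))) /\
    (forall j : nat, (1 <= j)%nat -> ~ Q_normal q j y).
Proof.
  intros Hq Hinf _ (_ & _ & HE & _) _.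
  destruct (functional_choice _ Hinf) as [g Hg].
  set (F := fun m => if in_zero_runs g m then 0%Z else E m).
  assert (HF : admissible_digits q F).
  { intros n Hn; unfold F.
    destruct (in_zero_runs g n); [specialize (Hq n Hn) | specialize (HE n Hn)]; lia. }
  assert (HFnm : infinitely_often_not_max q F).
  { intros m; exists (run_end g (S m)); pose proof (run_end_ge g (S m)); split; [lia|].
    unfold F; rewrite (in_zero_runs_intro g (S m)) by (rewrite ?run_end_S, ?run_len_S; nia).
    specialize (Hq (run_end g (S m)) ltac:(lia)); lia. }
  destruct (cantor_expansion_exists q Hq F HF HFnm) as [y Hy].
  exists y, F; split; [exact Hy|]; split.
  - apply (density_zero_of_sub_zero_runs g); intros m; unfold F.
    destruct (in_zero_runs g m); [reflexivity|]; rewrite Z.eqb_refl; discriminate.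
  - intros j Hj (F' & HF' & Hnormal).
    rewrite (cantor_expansion_unique q Hq y F' F HF' Hy) in Hnormal.
    apply (zero_runs_not_normal q g F j Hq Hg); [|exact Hj | exact Hnormal].
    intros m Hm; unfold F; rewrite Hm; reflexivity.
Qed.
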